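(* With the notation below, there are no $t,u\in N'$ such that $\langle N',*',t,u\rangle$ is a partial combinatory algebra.
   Context: Let $X$ be an infinite set of variables and $T(X)$ the set of terms built from variables in $X$ and two constant symbols $s,k$ by a binary application (juxtaposition, associating to the left). Let CL be the term rewriting system with rules $sxyz\to xz(yz)$ and $kxy\to x$; CL is confluent, so every term has at most one normal form. Let $N$ be the set of CL-normal forms, and for $m,n\in N$ let $m*n$ be the normal form of $mn$ if it exists, undefined otherwise. Let $i:=skk$, $\omega:=sii$, $d:=s(k\omega)(k\omega)$. Let $\mathrm{Var}(n)$ be the set of variables of a term $n$, $L:=\{n\in N\mid n*x\text{ is defined for } x\in X\setminus\mathrm{Var}(n)\}$, $N':=L\cup\{d\}$, and let $m*'n$ be $m*n$ if this is defined and lies in $N'$, undefined otherwise. A partial combinatory algebra is a set $A$ with a partial binary operation and elements $S,K\in A$ such that for all $x,y,z\in A$: $Sxy$ is defined, $Sxyz\simeq xz(yz)$, and $Kxy$ is defined and equals $x$; here products associate to the left, a compound product is defined only if all its sub-products are defined, and $\simeq$ means: if either side is defined then both are defined and equal. *)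

From Stdlib Require Import Relations.

Set Implicit Arguments.

Section CL.
Variable X : Type.

Inductive term : Type :=
| Var : X -> term
| Sc : term
| Kc : term
| App : term -> term -> term.

Inductive red1 : term -> term -> Prop :=
| red1_S : forall x y z, red1 (App (App (App Sc x) y) z) (App (App x z) (App y z))
| red1_K : forall x y, red1 (App (App Kc x) y) x
| red1_appL : forall t t' u, red1 t t' -> red1 (App t u) (App t' u)
| red1_appR : forall t u u', red1 u u' -> red1 (App t u) (App t u').

Definition red : term -> term -> Prop := clos_refl_trans term red1.

Definition normal (t : term) : Prop := forall t', ~ red1 t t'.

(** [nf t n]: n is the normal form of t (unique by confluence). *)
Definition nf (t n : term) : Prop := red t n /\ normal n.

Definition inN (n : term) : Prop := normal n.

Definition appN (m n r : term) : Prop := inN m /\ inN n /\ nf (App m n) r.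

Fixpoint occurs (x : X) (t : term) : Prop :=
  match t with
  | Var y => x = y
  | Sc => False
  | Kc => False
  | App t1 t2 => occurs x t1 \/ occurs x t2
  end.

Definition i_t : term := App (App Sc Kc) Kc.
Definition omega_t : term := App (App Sc i_t) i_t.
Definition d_t : term := App (App Sc (App Kc omega_t)) (App Kc omega_t).

Definition inL (n : term) : Prop :=
  inN n /\ forall x : X, ~ occurs x n -> exists r, appN n (Var x) r.

Definition inN' (n : term) : Prop := inL n \/ n = d_t.

Definition appN' (m n r : term) : Prop := inN' m /\ inN' n /\ appN m n r /\ inN' r.

End CL.

(** Partial combinatory algebra on a carrier A ⊆ T with a partial binary
    operation given as a relation [op a b c] ("a·b is defined and equals c").
    Compound products are defined iff all sub-products are; with a
    functional [op], "e evaluates to v" is expressed existentially. *)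
Definition is_pca {T : Type} (A : T -> Prop) (op : T -> T -> T -> Prop) (S K : T) : Prop :=
  (forall a b c, op a b c -> A a /\ A b /\ A c) /\
  (forall a b c c', op a b c -> op a b c' -> c = c') /\
  A S /\ A K /\
  forall x y z, A x -> A y -> A z ->
    (exists sx sxy, op S x sx /\ op sx y sxy) /\
    (forall v, (exists sx sxy, op S x sx /\ op sx y sxy /\ op sxy z v) <->
               (exists xz yz, op x z xz /\ op y z yz /\ op xz yz v)) /\
    (exists kx, op K x kx /\ op kx y x).

Definition infinite_type (X : Type) : Prop := exists f : nat -> X, forall m n, f m = f n -> m = n.

(* If (N', *', S', K') were a partial combinatory algebra, then for any variables
   x, y, z the terms x, y, z, x z, y z and x z (y z) are all normal forms in L, so the
   S-axiom yields S' x y z ->> x z (y z); taking x, y, z fresh for S' and substituting,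
   S' a b c ->> a c (b c) for all terms a, b, c.  With a = k (s i d), b = k (k i), c = k
   we get S' a b c ->> s i d (k i) ->> i, a normal form in N', so the S-axiom makes
   a *' c = s i d defined.  But s i d is neither d nor in L: s i d x -> i x (d x), whose
   head only ever reduces to x, while d x has no normal form. *)

From Stdlib Require Import Relations Lia Classical ClassicalEpsilon.

Set Implicit Arguments.

Section CombinatoryLogic.
Variable X : Type.

Local Notation s := (Sc X).
Local Notation k := (Kc X).
Local Notation i := (i_t X).
Local Notation d := (d_t X).
Local Notation "a · b" := (App a b) (at level 40, left associativity).

Lemma red_appL (t t' u : term X) : red t t' -> red (t · u) (t' · u).
Proof. induction 1; [apply rt_step; constructor | apply rt_refl | eapply rt_trans]; eauto. Qed.

Lemma red_appR (t u u' : term X) : red u u' -> red (t · u) (t · u').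
Proof. induction 1; [apply rt_step; constructor | apply rt_refl | eapply rt_trans]; eauto. Qed.

Lemma red_app (t t' u u' : term X) : red t t' -> red u u' -> red (t · u) (t' · u').
Proof. intros; eapply rt_trans; [apply red_appL | apply red_appR]; eassumption. Qed.

Inductive par : term X -> term X -> Prop :=
| par_var x : par (Var x) (Var x)
| par_s : par s s
| par_k : par k k
| par_app t t' u u' : par t t' -> par u u' -> par (t · u) (t' · u')
| par_S a a' b b' c c' : par a a' -> par b b' -> par c c' ->
    par (s · a · b · c) (a' · c' · (b' · c'))
| par_K a a' b : par a a' -> par (k · a · b) a'.

Lemma par_refl (t : term X) : par t t.
Proof. induction t; constructor; assumption. Qed.

Lemma red1_par (t t' : term X) : red1 t t' -> par t t'.
Proof.
  induction 1; [apply par_S | apply par_K | apply par_app | apply par_app]; auto using par_refl.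
Qed.

Lemma par_red (t t' : term X) : par t t' -> red t t'.
Proof.
  induction 1; try apply rt_refl; try (apply red_app; assumption).
  - eapply rt_trans; [| apply rt_step, red1_S].
    repeat apply red_app; solve [apply rt_refl | assumption].
  - eapply rt_trans; [apply rt_step, red1_K | assumption].
Qed.

Fixpoint develop (t : term X) : term X :=
  match t with
  | App (App (Kc _) a) _ => develop a
  | App (App (App (Sc _) a) b) c => develop a · develop c · (develop b · develop c)
  | App a b => develop a · develop b
  | _ => t
  end.

Lemma par_develop (t t' : term X) : par t t' -> par t' (develop t).
Proof.
  induction 1 as [| | |t t' u u' Ht IHt _ IHu|a a' b b' c c' _ IHa _ IHb _ IHc|a a' b _ IHa];
    simpl in *; try constructor; try (repeat apply par_app; assumption).
  destruct t as [| | |t1 t2]; try (apply par_app; assumption).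
  destruct t1 as [| | |t11 t12]; try (apply par_app; assumption).
  - inversion Ht as [| | |? t'1 ? t'2 Hk| |]; subst.
    inversion Hk; subst. inversion IHt; subst.
    apply par_K; assumption.
  - destruct t11; try (apply par_app; assumption).
    inversion Ht as [| | |? t'1 ? t'2 Hsa| |]; subst.
    inversion Hsa as [| | |? t'11 ? t'12 Hs| |]; subst.
    inversion Hs; subst. inversion IHt as [| | |? ? ? ? Hsd| |]; subst.
    inversion Hsd; subst. apply par_S; assumption.
Qed.

Lemma par_strip (t t2 : term X) :
  red t t2 -> forall t1, par t t1 -> exists t3, red t1 t3 /\ par t2 t3.
Proof.
  induction 1 as [t t2 R| t| t t' t2 _ IH1 _ IH2]; intros t1 P.
  - exists (develop t).
    split; [apply par_red, par_develop | apply par_develop, red1_par]; assumption.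
  - exists t1; split; [apply rt_refl | assumption].
  - destruct (IH1 _ P) as [t3 [R3 P3]]; destruct (IH2 _ P3) as [t4 [R4 P4]].
    exists t4; split; [eapply rt_trans |]; eassumption.
Qed.

Lemma red_confluent (t t1 t2 : term X) : red t t1 -> red t t2 -> exists t3, red t1 t3 /\ red t2 t3.
Proof.
  intros R1; revert t2; induction R1 as [t t1 R| t| t t' t1 _ IH1 _ IH2]; intros t2 R2.
  - destruct (par_strip R2 (red1_par R)) as [t3 [R3 P3]].
    exists t3; split; [| apply par_red]; assumption.
  - exists t2; split; [assumption | apply rt_refl].
  - destruct (IH1 _ R2) as [t3 [R3 R3']]; destruct (IH2 _ R3) as [t4 [R4 R4']].
    exists t4; split; [| eapply rt_trans]; eassumption.
Qed.

Lemma normal_red_eq (n t : term X) : normal n -> red n t -> t = n.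
Proof.
  intros Hn R; induction R as [n t R| |n t t' _ IH1 _ IH2].
  - destruct (Hn _ R).
  - reflexivity.
  - specialize (IH1 Hn); subst; apply IH2, Hn.
Qed.

Lemma nf_unique (t n1 n2 : term X) : nf t n1 -> nf t n2 -> n1 = n2.
Proof.
  intros [R1 N1] [R2 N2]; destruct (red_confluent R1 R2) as [n3 [R13 R23]].
  rewrite <- (normal_red_eq N1 R13); apply normal_red_eq; assumption.
Qed.

Lemma nf_red (t t' n : term X) : nf t n -> red t t' -> nf t' n.
Proof.
  intros [R N] R'; destruct (red_confluent R R') as [n' [Rn Rn']].
  rewrite (normal_red_eq N Rn) in Rn'; split; assumption.
Qed.

Definition contract (t : term X) : option (term X) :=
  match t with
  | App (App (App (Sc _) a) b) c => Some (a · c · (b · c))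
  | App (App (Kc _) a) _ => Some a
  | _ => None
  end.

Fixpoint step (t : term X) : option (term X) :=
  match contract t with
  | Some r => Some r
  | None =>
      match t with
      | App a b =>
          match step a with
          | Some a' => Some (a' · b)
          | None => option_map (App a) (step b)
          end
      | _ => None
      end
  end.

Lemma contract_red1 (t r : term X) : contract t = Some r -> red1 t r.
Proof.
  intros H; unfold contract in H.
  repeat match type of H with context [match ?u with _ => _ end] => destruct u end;
    try discriminate; injection H as <-; constructor.
Qed.

Lemma step_red1 (t r : term X) : step t = Some r -> red1 t r.
Proof.
  revert r; induction t as [| | |a IHa b IHb]; intros r; cbn [step]; try discriminate.
  destruct (contract (a · b)) eqn:C; [intros [= <-]; apply contract_red1; assumption |].
  destruct (step a) as [a'|]; [intros [= <-]; apply red1_appL, IHa; reflexivity |].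
  destruct (step b) as [b'|]; simpl; [| discriminate].
  intros [= <-]; apply red1_appR, IHb; reflexivity.
Qed.

Lemma step_app_None (a b : term X) : step (a · b) = None -> step a = None /\ step b = None.
Proof.
  cbn [step]; destruct (contract (a · b)); [discriminate |].
  destruct (step a), (step b); simpl; try discriminate; split; reflexivity.
Qed.

Lemma normal_of_step (t : term X) : step t = None -> normal t.
Proof.
  intros H t' R; induction R; try discriminate H;
    apply step_app_None in H as [Ha Hb]; auto.
Qed.

Fixpoint reduce (n : nat) (t : term X) : term X :=
  match n with
  | 0 => t
  | S n => match step t with Some t' => reduce n t' | None => t end
  end.

Lemma red_reduce n (t : term X) : red t (reduce n t).
Proof.
  revert t; induction n as [|n IH]; intros t; simpl; [apply rt_refl |].
  destruct (step t) eqn:E; [| apply rt_refl].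
  eapply rt_trans; [apply rt_step, step_red1, E | apply IH].
Qed.

Lemma red_of_reduce n (t t' : term X) : reduce n t = t' -> red t t'.
Proof. intros <-; apply red_reduce. Qed.

Ltac no_red1_from_normal :=
  match goal with H : red1 ?a _ |- _ => destruct (normal_of_step (t := a) eq_refl H) end.

Lemma inN'_of_step (n : term X) m :
  step n = None -> (forall x, step (reduce m (n · Var x)) = None) -> inN' n.
Proof.
  intros Hn Hnx; left; split; [apply normal_of_step, Hn |].
  intros x _; exists (reduce m (n · Var x)).
  repeat split; try apply normal_of_step; auto using red_reduce.
Qed.

Lemma inN'_normal (n : term X) : inN' n -> normal n.
Proof. intros [[Hn _] | ->]; [exact Hn | apply normal_of_step; reflexivity]. Qed.

Lemma appN'_intro (m n r : term X) : inN' m -> inN' n -> inN' r -> red (m · n) r -> appN' m n r.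
Proof.
  intros Hm Hn Hr R; unfold appN', appN, inN, nf; repeat split; auto using inN'_normal.
Qed.

Lemma appN'_nf (m n r : term X) : appN' m n r -> nf (m · n) r.
Proof. intros (_ & _ & (_ & _ & H) & _); exact H. Qed.

Lemma appN'_red (m n r : term X) : appN' m n r -> red (m · n) r.
Proof. intros H; apply (appN'_nf H). Qed.

Lemma appN'_inN' (m n r : term X) : appN' m n r -> inN' r.
Proof. intros (_ & _ & _ & Hr); exact Hr. Qed.

Lemma appN'_red2 (m a b ma mab : term X) : appN' m a ma -> appN' ma b mab -> red (m · a · b) mab.
Proof. intros H1 H2; eapply rt_trans; [apply red_appL, (appN'_red H1) | apply (appN'_red H2)]. Qed.

Lemma red_invariant (P : term X -> Prop) :
  (forall t t', P t -> red1 t t' -> P t') -> forall t t', red t t' -> P t -> P t'.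
Proof. intros HP t t' R; induction R; eauto. Qed.

Lemma no_nf_of_invariant (P : term X -> Prop) :
  (forall t t', P t -> red1 t t' -> P t') -> (forall t, P t -> ~ normal t) ->
  forall t n, P t -> ~ nf t n.
Proof. intros HP Hnot t n Ht [R N]; exact (Hnot n (red_invariant P HP R Ht) N). Qed.

Local Notation ω := (omega_t X).

(* d W -> k ω W (k ω W) ->> ω (k ω W) -> i (k ω W) (i (k ω W)) -> ...: every reduct of
   d W is d W' or an application of two terms from the family below, whose
   applications always have a redex. *)

Inductive omega_like : term X -> Prop :=
| omega_like_omega : omega_like ω
| omega_like_i W : omega_like W -> omega_like (i · W)
| omega_like_k W V : omega_like W -> omega_like (k · W · V).

Lemma omega_like_red1 (W W' : term X) : omega_like W -> red1 W W' -> omega_like W'.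
Proof.
  intros HW; revert W'; induction HW as [|W HW IH|W V HW IH]; intros W' R.
  - no_red1_from_normal.
  - inversion R; subst; [| no_red1_from_normal |].
    + apply omega_like_k; assumption.
    + apply omega_like_i, IH; assumption.
  - inversion R as [| |? ? ? Rk|]; subst.
    + assumption.
    + inversion Rk as [| |? ? ? Rk'|]; subst; [inversion Rk' |].
      apply omega_like_k, IH; assumption.
    + apply omega_like_k; assumption.
Qed.

Inductive d_reduct : term X -> Prop :=
| d_reduct_d W : d_reduct (d · W)
| d_reduct_omega A B : omega_like A -> omega_like B -> d_reduct (A · B).

Lemma d_reduct_red1 (R R' : term X) : d_reduct R -> red1 R R' -> d_reduct R'.
Proof.
  intros [W|A B HA HB] Hred.
  - inversion Hred; subst; [| no_red1_from_normal | apply d_reduct_d].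
    apply d_reduct_omega; apply omega_like_k, omega_like_omega.
  - inversion HA as [|W HW|W V HW]; subst; inversion Hred as [| |? A' ? RA|? ? B' RB]; subst;
      try no_red1_from_normal;
      try (apply d_reduct_omega; eauto using omega_like_red1; fail).
    apply d_reduct_omega; apply omega_like_i; assumption.
Qed.

Lemma d_reduct_not_normal (R : term X) : d_reduct R -> ~ normal R.
Proof.
  intros [W|A B [|W _|W V _] _] Hn.
  - exact (Hn _ (red1_S _ _ _)).
  - exact (Hn _ (red1_S _ _ _)).
  - exact (Hn _ (red1_appL _ (red1_S _ _ _))).
  - exact (Hn _ (red1_appL _ (red1_K _ _))).
Qed.

Inductive i_reduct (y : X) : term X -> Prop :=
| i_reduct_i : i_reduct y (i · Var y)
| i_reduct_k V : i_reduct y (k · Var y · V)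
| i_reduct_var : i_reduct y (Var y).

Lemma i_reduct_red1 y (J J' : term X) : i_reduct y J -> red1 J J' -> i_reduct y J'.
Proof.
  intros [| V |] Hred; inversion Hred as [| |? ? ? R|? ? ? R]; subst;
    try no_red1_from_normal; try inversion R; subst; constructor.
Qed.

Inductive sid_reduct (y : X) : term X -> Prop :=
| sid_reduct_sid : sid_reduct y (s · i · d · Var y)
| sid_reduct_app J R : i_reduct y J -> d_reduct R -> sid_reduct y (J · R).

Lemma sid_reduct_red1 y (t t' : term X) : sid_reduct y t -> red1 t t' -> sid_reduct y t'.
Proof.
  intros [|J R HJ HR] Hred.
  - inversion Hred as [| |? ? ? R|? ? ? R]; subst; [| no_red1_from_normal | inversion R].
    apply sid_reduct_app; constructor.
  - inversion Hred; subst; try (inversion HJ; fail);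
      constructor; eauto using i_reduct_red1, d_reduct_red1.
Qed.

Lemma sid_reduct_not_normal y (t : term X) : sid_reduct y t -> ~ normal t.
Proof.
  intros [|J R _ HR] Hn.
  - exact (Hn _ (red1_S _ _ _)).
  - apply (d_reduct_not_normal HR); intros R' Hred; exact (Hn _ (red1_appR _ Hred)).
Qed.

Definition sid : term X := s · i · d.

Definition const (a : term X) : term X := k · a.

Lemma const_app_red (a c : term X) : red (const a · c) a.
Proof. apply rt_step, red1_K. Qed.

Lemma sid_const_red (a : term X) : red (sid · const a) a.
Proof. apply (red_of_reduce 4); reflexivity. Qed.

Lemma sid_app_var_no_nf y (n : term X) : ~ nf (sid · Var y) n.
Proof.
  apply (no_nf_of_invariant (sid_reduct y)).
  - apply sid_reduct_red1.
  - apply sid_reduct_not_normal.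
  - apply sid_reduct_sid.
Qed.

(* The variable [y] matters: if X were empty, L would be all of N. *)
Lemma sid_notin_N' (y : X) : ~ inN' sid.
Proof.
  intros [[_ HL] | E]; [| discriminate E].
  destruct (HL y) as [n (_ & _ & Hn)]; [simpl; tauto |].
  exact (sid_app_var_no_nf Hn).
Qed.

Fixpoint subst_term (σ : X -> term X) (t : term X) : term X :=
  match t with
  | Var x => σ x
  | App a b => subst_term σ a · subst_term σ b
  | c => c
  end.

Lemma red1_subst σ (t t' : term X) : red1 t t' -> red1 (subst_term σ t) (subst_term σ t').
Proof. induction 1; constructor; assumption. Qed.

Lemma red_subst σ (t t' : term X) : red t t' -> red (subst_term σ t) (subst_term σ t').
Proof. induction 1; [apply rt_step, red1_subst | apply rt_refl | eapply rt_trans]; eassumption. Qed.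

Lemma subst_term_id σ (t : term X) :
  (forall x, occurs x t -> σ x = Var x) -> subst_term σ t = t.
Proof. induction t; simpl; intros H; f_equal; auto. Qed.

Definition update (σ : X -> term X) (x : X) (a : term X) (v : X) : term X :=
  if excluded_middle_informative (v = x) then a else σ v.

Lemma update_eq σ x (a : term X) : update σ x a x = a.
Proof. unfold update; destruct excluded_middle_informative; congruence. Qed.

Lemma update_neq σ x (a : term X) v : v <> x -> update σ x a v = σ v.
Proof. unfold update; destruct excluded_middle_informative; congruence. Qed.

Lemma fresh_index (f : nat -> X) (t : term X) :
  (forall m n, f m = f n -> m = n) -> exists N, forall m, N <= m -> ~ occurs (f m) t.
Proof.
  intros Hf; induction t as [y| | |a [Na Ha] b [Nb Hb]].
  - destruct (classic (exists m, f m = y)) as [[m0 <-] | Hy].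
    + exists (S m0); intros m Hm E; apply Hf in E; lia.
    + exists 0; intros m _ E; exact (Hy (ex_intro _ m E)).
  - exists 0; simpl; tauto.
  - exists 0; simpl; tauto.
  - exists (Na + Nb); intros m Hm [E | E]; [apply (Ha m) | apply (Hb m)]; auto; lia.
Qed.

Section PCA.
Variables S' K' : term X.
Hypothesis pca : is_pca (@inN' X) (@appN' X) S' K'.

Lemma pca_S_red_of_appN' (x y z xz yz v : term X) :
  inN' x -> inN' y -> inN' z -> appN' x z xz -> appN' y z yz -> appN' xz yz v ->
  red (S' · x · y · z) v.
Proof.
  intros Hx Hy Hz Hxz Hyz Hv; destruct pca as (_ & _ & _ & _ & Hax).
  destruct (Hax x y z Hx Hy Hz) as [_ [HSxyz _]].
  destruct (proj2 (HSxyz v) (ex_intro _ xz (ex_intro _ yz (conj Hxz (conj Hyz Hv)))))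
    as (Sx & Sxy & HSx & HSxy & HSxyv).
  eapply rt_trans; [apply red_appL, (appN'_red2 HSx HSxy) | apply (appN'_red HSxyv)].
Qed.

Lemma pca_S_red_vars x y z :
  red (S' · Var x · Var y · Var z) (Var x · Var z · (Var y · Var z)).
Proof.
  apply (pca_S_red_of_appN' (xz := Var x · Var z) (yz := Var y · Var z));
    try apply appN'_intro; try apply rt_refl; apply (inN'_of_step _ 0); reflexivity.
Qed.

Lemma pca_S_reduces_as_s (HX : infinite_type X) (a b c : term X) :
  red (S' · a · b · c) (a · c · (b · c)).
Proof.
  destruct HX as [f Hf]; destruct (fresh_index f S' Hf) as [N HN].
  set (x := f N); set (y := f (1 + N)); set (z := f (2 + N)).
  assert (Hxy : x <> y) by (intros E; apply Hf in E; lia).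
  assert (Hxz : x <> z) by (intros E; apply Hf in E; lia).
  assert (Hyz : y <> z) by (intros E; apply Hf in E; lia).
  set (σ := update (update (update (@Var X) x a) y b) z c).
  assert (Hσx : σ x = a) by (unfold σ; rewrite update_neq, update_neq, update_eq; auto).
  assert (Hσy : σ y = b) by (unfold σ; rewrite update_neq, update_eq; auto).
  assert (Hσz : σ z = c) by (unfold σ; rewrite update_eq; auto).
  assert (HσS : subst_term σ S' = S').
  { apply subst_term_id; intros v Hv; unfold σ.
    rewrite !update_neq; try reflexivity; intros ->; refine (HN _ _ Hv); lia. }
  pose proof (red_subst σ (pca_S_red_vars x y z)) as R; simpl in R.
  rewrite HσS, Hσx, Hσy, Hσz in R; exact R.
Qed.

Lemma pca_S_left_defined (a b c v : term X) :
  inN' a -> inN' b -> inN' c -> inN' v -> nf (S' · a · b · c) v -> exists ac, appN' a c ac.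
Proof.
  intros Ha Hb Hc Hv Hnf; destruct pca as (Hop & _ & _ & _ & Hax).
  destruct (Hax a b c Ha Hb Hc) as [(Sa & Sab & HSa & HSab) [HSabc _]].
  destruct (proj1 (HSabc v)) as (ac & bc & Hac & _); [| exists ac; exact Hac].
  exists Sa, Sab; split; [exact HSa | split; [exact HSab |]].
  apply appN'_intro; [apply (Hop _ _ _ HSab) | exact Hc | exact Hv |].
  apply (nf_red Hnf), red_appL, (appN'_red2 HSa HSab).
Qed.

End PCA.

End CombinatoryLogic.

Theorem proposition5p3 (X : Type) (HX : infinite_type X) :
  ~ exists t u : term X, is_pca (@inN' X) (@appN' X) t u.
Proof.
  intros [S [K Hpca]].
  set (a := const (sid X)); set (b := const (const (i_t X))); set (c := Kc X).
  assert (Habc : nf (App (App (App S a) b) c) (i_t X)).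
  { split; [| apply normal_of_step; reflexivity].
    eapply rt_trans; [apply (pca_S_reduces_as_s Hpca HX) |].
    eapply rt_trans; [apply red_app; apply const_app_red | apply sid_const_red]. }
  destruct (pca_S_left_defined Hpca (a := a) (b := b) (c := c) (v := i_t X)) as [ac Hac];
    try (apply (inN'_of_step _ 3); reflexivity); [exact Habc |].
  assert (Hac_sid : ac = sid X).
  { apply (nf_unique (appN'_nf Hac)).
    split; [apply const_app_red | apply normal_of_step; reflexivity]. }
  destruct HX as [f _].
  apply (sid_notin_N' (f 0)); rewrite <- Hac_sid; exact (appN'_inN' Hac).
Qed.
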